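(* Let $s$ be a continuous proper scoring rule with convex exposure on an $n$-outcome forecast domain $\mathcal{D}$, with exposure function $\mathbf{g}$, and fix $\mathbf{p}_1,\dots,\mathbf{p}_m\in\mathcal{D}$. For a weight vector $\mathbf{w}=(w_1,\dots,w_m)\in\Delta^m$ and $j\in[n]$ define the weight-score \[\mathrm{WS}_j(\mathbf{w}):=s(\mathbf{p}^*_{\mathbf{w}};j),\] where $\mathbf{p}^*_{\mathbf{w}}$ is the quasi-arithmetic pool of $(\mathbf{p}_i,w_i)_{i=1}^m$ with respect to $\mathbf{g}$. Then for every $j\in[n]$, $\mathrm{WS}_j$ is a concave function of $\mathbf{w}$ on $\Delta^m$.
   Context: $\Delta^k$ is the standard simplex in $\mathbb{R}^k$ (probability vectors); $\delta_j$ is the $j$-th standard basis vector. An $n$-outcome forecast domain is a convex $(n-1)$-dimensional subset of $\Delta^n$. A proper scoring rule on $\mathcal{D}$ is $s:\mathcal{D}\times[n]\to\mathbb{R}$ with $\sum_j p(j)s(\mathbf{p};j)\ge\sum_j p(j)s(\mathbf{x};j)$ for all $\mathbf{p},\mathbf{x}\in\mathcal{D}$, equality only if $\mathbf{x}=\mathbf{p}$. $G(\mathbf{p}):=\sum_j p(j)s(\mathbf{p};j)$ is differentiable and strictly convex, $\mathbf{g}=\nabla G$ (values modulo translation by the all-ones vector), and $s(\mathbf{p};j)=G(\mathbf{p})+\langle\mathbf{g}(\mathbf{p}),\delta_j-\mathbf{p}\rangle$. Convex exposure: the range of $\mathbf{g}$ is convex. The QA pool with weights $\mathbf{w}$ is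 the unique $\mathbf{p}^*_{\mathbf{w}}\in\mathcal{D}$ with $\mathbf{g}(\mathbf{p}^*_{\mathbf{w}})=\sum_i w_i\mathbf{g}(\mathbf{p}_i)$ (modulo the all-ones vector). *)

From HB Require Import structures.
From mathcomp Require Import all_boot all_order all_algebra.
From mathcomp Require Import reals.
From Stdlib Require Import ClassicalEpsilon.
Set Implicit Arguments. Unset Strict Implicit. Unset Printing Implicit Defensive.
Import Order.TTheory GRing.Theory Num.Theory.
Local Open Scope ring_scope.

Section Defs.
Variable R : realType.

Definition dotv n (u v : 'rV[R]_n) : R := \sum_(j < n) u 0 j * v 0 j.
Definition l1dist n (x y : 'rV[R]_n) : R := \sum_(j < n) `|x 0 j - y 0 j|.

Definition ones n : 'rV[R]_n := const_mx 1.
Definition delta n (j : 'I_n) : 'rV[R]_n := delta_mx 0 j.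

Definition in_simplex n (x : 'rV[R]_n) : Prop :=
  (forall j, 0 <= x 0 j) /\ \sum_(j < n) x 0 j = 1.

Definition convex_set n (A : 'rV[R]_n -> Prop) : Prop :=
  forall x y (t : R), A x -> A y -> 0 <= t <= 1 -> A (t *: x + (1 - t) *: y).

Definition affinely_independent n k (q : 'I_k -> 'rV[R]_n) : Prop :=
  forall c : 'I_k -> R, \sum_(i < k) c i *: q i = 0 -> \sum_(i < k) c i = 0 ->
    forall i, c i = 0.

(* an n-outcome forecast domain: a convex subset of Delta^n of dimension n-1,
   i.e. containing n affinely independent points *)
Definition forecast_domain n (D : 'rV[R]_n -> Prop) : Prop :=
  [/\ convex_set D, (forall x, D x -> in_simplex x) &
      exists q : 'I_n -> 'rV[R]_n, (forall i, D (q i)) /\ affinely_independent q].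

Definition expected_score n (s : 'rV[R]_n -> 'I_n -> R) (p x : 'rV[R]_n) : R :=
  \sum_(j < n) p 0 j * s x j.

Definition proper_scoring_rule n (D : 'rV[R]_n -> Prop) (s : 'rV[R]_n -> 'I_n -> R) : Prop :=
  forall p x, D p -> D x ->
    expected_score s p x <= expected_score s p p /\
    (expected_score s p x = expected_score s p p -> x = p).

Definition Gfun n (s : 'rV[R]_n -> 'I_n -> R) (p : 'rV[R]_n) : R := expected_score s p p.

Definition continuous_on n (D : 'rV[R]_n -> Prop) (f : 'rV[R]_n -> R) : Prop :=
  forall p, D p -> forall e : R, 0 < e -> exists2 d : R, 0 < d &
    forall x, D x -> l1dist x p < d -> `|f x - f p| < e.

Definition continuous_scoring_rule n (D : 'rV[R]_n -> Prop) (s : 'rV[R]_n -> 'I_n -> R) : Prop :=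
  forall j, continuous_on D (fun p => s p j).

(* g(p) is a gradient of G at every p in D (relative to D; hence determined
   only modulo the all-ones vector) *)
Definition gradient_on n (D : 'rV[R]_n -> Prop) (G : 'rV[R]_n -> R)
    (g : 'rV[R]_n -> 'rV[R]_n) : Prop :=
  forall p, D p -> forall e : R, 0 < e -> exists2 d : R, 0 < d &
    forall x, D x -> l1dist x p < d ->
      `|G x - G p - dotv (g p) (x - p)| <= e * l1dist x p.

Definition strictly_convex_on n (D : 'rV[R]_n -> Prop) (G : 'rV[R]_n -> R) : Prop :=
  forall x y (t : R), D x -> D y -> x <> y -> 0 < t < 1 ->
    G (t *: x + (1 - t) *: y) < t * G x + (1 - t) * G y.

Definition exposure_function n (D : 'rV[R]_n -> Prop) (s : 'rV[R]_n -> 'I_n -> R)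
    (g : 'rV[R]_n -> 'rV[R]_n) : Prop :=
  gradient_on D (Gfun s) g /\
  forall p j, D p -> s p j = Gfun s p + dotv (g p) (delta j - p).

Definition convex_exposure n (D : 'rV[R]_n -> Prop) (g : 'rV[R]_n -> 'rV[R]_n) : Prop :=
  convex_set (fun v => exists p (c : R), D p /\ v = g p + c *: ones n).

Definition is_qa_pool n m (D : 'rV[R]_n -> Prop) (g : 'rV[R]_n -> 'rV[R]_n)
    (ps : 'I_m -> 'rV[R]_n) (w : 'rV[R]_m) (q : 'rV[R]_n) : Prop :=
  D q /\ exists c : R, g q = \sum_(i < m) w 0 i *: g (ps i) + c *: ones n.

(* the QA pool p*_w (the unique such point, chosen by description) *)
Definition qa_pool n m (D : 'rV[R]_n -> Prop) (g : 'rV[R]_n -> 'rV[R]_n)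
    (ps : 'I_m -> 'rV[R]_n) (w : 'rV[R]_m) : 'rV[R]_n :=
  epsilon (inhabits (0 : 'rV[R]_n)) (is_qa_pool D g ps w).

Definition weight_score n m (D : 'rV[R]_n -> Prop) (s : 'rV[R]_n -> 'I_n -> R)
    (g : 'rV[R]_n -> 'rV[R]_n) (ps : 'I_m -> 'rV[R]_n) (j : 'I_n) (w : 'rV[R]_m) : R :=
  s (qa_pool D g ps w) j.

Definition concave_on_simplex m (f : 'rV[R]_m -> R) : Prop :=
  forall w1 w2 (t : R), in_simplex w1 -> in_simplex w2 -> 0 <= t <= 1 ->
    t * f w1 + (1 - t) * f w2 <= f (t *: w1 + (1 - t) *: w2).

End Defs.

From HB Require Import structures.
From mathcomp Require Import all_boot all_order all_algebra.
From mathcomp Require Import reals.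
From mathcomp Require Import ring lra.
From Stdlib Require Import ClassicalEpsilon.
Set Implicit Arguments. Unset Strict Implicit. Unset Printing Implicit Defensive.
Import Order.TTheory GRing.Theory Num.Theory.
Local Open Scope ring_scope.

(** Writing [q] for the pool at [t w1 + (1 - t) w2] and [q1], [q2] for the
    pools at [w1], [w2], the exposures combine affinely:
    [g q = t g q1 + (1 - t) g q2] modulo the all-ones vector, which is
    invisible to the zero-sum vector [delta_j - q].  Properness makes the
    tangent plane of [G] at [q_i] lie below [G], so
    [s(q_i; j) <= G q + <g q_i, delta_j - q>]; averaging these two bounds
    with weights [t] and [1 - t] gives exactly [G q + <g q, delta_j - q> = s(q; j)]. *)

Section Vectors.
Variable R : realType.

Lemma convex_set_sum n (S : 'rV[R]_n -> Prop) : convex_set S ->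
  forall m (a : 'I_m -> 'rV_n) (w : 'I_m -> R), (forall i, S (a i)) ->
  (forall i, 0 <= w i) -> \sum_i w i = 1 -> S (\sum_i w i *: a i).
Proof.
move=> cS; elim=> [|m IH] a w Sa w_ge0 w_sum.
  by move: w_sum; rewrite big_ord0 => /eqP; rewrite eq_sym oner_eq0.
rewrite big_ord_recl; move: w_sum; rewrite big_ord_recl => w_sum.
set r := \sum_(i < m) w (lift ord0 i) in w_sum.
have r_ge0 : 0 <= r by apply: sumr_ge0.
have [r_eq0 | r_neq0] := eqVneq r 0.
  have wi0 i : w (lift ord0 i) = 0 by apply: (psumr_eq0P _ r_eq0).
  rewrite big1 ?addr0; last by move=> i _; rewrite wi0 scale0r.
  have -> : w ord0 = 1 by rewrite r_eq0 addr0 in w_sum.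
  by rewrite scale1r.
have S_tail : S (\sum_(i < m) (w (lift ord0 i) / r) *: a (lift ord0 i)).
  apply: IH => //; first by move=> i; apply: divr_ge0.
  by rewrite -mulr_suml mulfV.
have t01 : 0 <= w ord0 <= 1 by rewrite w_ge0 /=; lra.
have := cS _ _ (w ord0) (Sa ord0) S_tail t01.
have -> : 1 - w ord0 = r by lra.
rewrite scaler_sumr; congr (S (_ + _)); apply: eq_bigr => i _.
by rewrite scalerA mulrCA mulfV // mulr1.
Qed.

Lemma convex_simplex m : convex_set (@in_simplex R m).
Proof.
move=> w1 w2 t [w1_ge0 w1_sum] [w2_ge0 w2_sum] /andP[t_ge0 t_le1]; split.
  by move=> k; rewrite !mxE addr_ge0 // mulr_ge0 // subr_ge0.
under eq_bigr do rewrite !mxE.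
by rewrite big_split /= -!mulr_sumr w1_sum w2_sum; ring.
Qed.

Variable n : nat.
Implicit Types u v x y : 'rV[R]_n.

Lemma dotvDl u v y : dotv (u + v) y = dotv u y + dotv v y.
Proof. by rewrite /dotv -big_split; apply: eq_bigr => k _; rewrite mxE mulrDl. Qed.

Lemma dotvZl (c : R) u y : dotv (c *: u) y = c * dotv u y.
Proof. by rewrite /dotv mulr_sumr; apply: eq_bigr => k _; rewrite mxE mulrA. Qed.

Lemma dotvBr u x y : dotv u (x - y) = dotv u x - dotv u y.
Proof. by rewrite /dotv -sumrB; apply: eq_bigr => k _; rewrite !mxE mulrBr. Qed.

Lemma dotv_ones y : dotv (ones R n) y = \sum_k y 0 k.
Proof. by apply: eq_bigr => k _; rewrite mxE mul1r. Qed.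

Lemma dotv_delta u j : dotv u (delta R j) = u 0 j.
Proof.
rewrite /dotv (bigD1 j) //= !mxE !eqxx mulr1 big1 ?addr0 // => k /negbTE kj.
by rewrite !mxE kj mulr0.
Qed.

Lemma sum_delta j : \sum_k (delta R j : 'rV[R]_n) 0 k = 1.
Proof.
rewrite (bigD1 j) //= !mxE !eqxx big1 ?addr0 // => k /negbTE kj.
by rewrite !mxE kj.
Qed.

Lemma sum_delta_sub j x : in_simplex x -> \sum_k (delta R j - x) 0 k = 0.
Proof.
move=> [_ x_sum]; under eq_bigr => k _ do rewrite mxE [(- x) 0 k]mxE.
by rewrite sumrB sum_delta x_sum subrr.
Qed.

End Vectors.

Section ScoringRules.
Variables (R : realType) (n : nat) (D : 'rV[R]_n -> Prop).
Variables (s : 'rV[R]_n -> 'I_n -> R) (g : 'rV[R]_n -> 'rV[R]_n).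
Hypothesis s_exposure : forall p j, D p -> s p j = Gfun s p + dotv (g p) (delta R j - p).
Implicit Types x p : 'rV[R]_n.

Lemma expected_score_exposure x p : D p -> \sum_j x 0 j = 1 ->
  expected_score s x p = Gfun s p + dotv (g p) (x - p).
Proof.
move=> Dp x_sum; rewrite /expected_score.
under eq_bigr do rewrite s_exposure // dotvBr dotv_delta.
transitivity ((Gfun s p - dotv (g p) p) * \sum_j x 0 j + dotv (g p) x).
  by rewrite mulr_sumr -big_split; apply: eq_bigr => k _ /=; ring.
by rewrite x_sum mulr1 dotvBr; ring.
Qed.

Hypothesis s_proper : proper_scoring_rule D s.
Hypothesis D_simplex : forall x, D x -> in_simplex x.

Lemma Gfun_ge_tangent x p : D x -> D p -> Gfun s p + dotv (g p) (x - p) <= Gfun s x.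
Proof.
move=> Dx Dp; rewrite -expected_score_exposure //; last by case: (D_simplex Dx).
exact: (s_proper Dx Dp).1.
Qed.

Lemma score_le_tangent x p j : D x -> D p ->
  s p j <= Gfun s x + dotv (g p) (delta R j - x).
Proof.
move=> Dx Dp; have := Gfun_ge_tangent Dx Dp.
by rewrite s_exposure // !dotvBr; lra.
Qed.

End ScoringRules.

Section QAPool.
Variables (R : realType) (n m : nat) (D : 'rV[R]_n -> Prop).
Variables (g : 'rV[R]_n -> 'rV[R]_n) (ps : 'I_m -> 'rV[R]_n).

Lemma qa_poolP : convex_exposure D g -> (forall i, D (ps i)) ->
  forall w, in_simplex w -> is_qa_pool D g ps w (qa_pool D g ps w).
Proof.
move=> g_convex D_ps w [w_ge0 w_sum]; apply: epsilon_spec.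
have [|p [c [Dp gp]]] :=
  convex_set_sum g_convex (a := fun i => g (ps i)) (w := fun i => w 0 i) _ w_ge0 w_sum.
  by move=> i; exists (ps i), 0; rewrite scale0r addr0.
by exists p; split => //; exists (- c); rewrite gp scaleNr addrK.
Qed.

Lemma is_qa_pool_combine w1 w2 (t : R) q1 q2 q :
  is_qa_pool D g ps w1 q1 -> is_qa_pool D g ps w2 q2 ->
  is_qa_pool D g ps (t *: w1 + (1 - t) *: w2) q ->
  exists c : R, g q = t *: g q1 + (1 - t) *: g q2 + c *: ones R n.
Proof.
move=> [_ [c1 g_q1]] [_ [c2 g_q2]] [_ [c g_q]].
exists (c - t * c1 - (1 - t) * c2); rewrite g_q.
have -> : \sum_i (t *: w1 + (1 - t) *: w2) 0 i *: g (ps i) =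
    t *: \sum_i w1 0 i *: g (ps i) + (1 - t) *: \sum_i w2 0 i *: g (ps i).
  rewrite !scaler_sumr -big_split; apply: eq_bigr => i _.
  by rewrite !mxE !scalerA scalerDl.
rewrite g_q1 g_q2 !scalerDr !scalerA !scalerBl; apply/rowP => k; rewrite !mxE.
ring.
Qed.

End QAPool.

Theorem theorem5p1 (R : realType) (n m : nat) (D : 'rV[R]_n -> Prop)
    (s : 'rV[R]_n -> 'I_n -> R) (g : 'rV[R]_n -> 'rV[R]_n)
    (ps : 'I_m -> 'rV[R]_n) :
  forecast_domain D ->
  proper_scoring_rule D s ->
  continuous_scoring_rule D s ->
  strictly_convex_on D (Gfun s) ->
  exposure_function D s g ->
  convex_exposure D g ->
  (forall i, D (ps i)) ->
  forall j : 'I_n, concave_on_simplex (weight_score D s g ps j).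
Proof.
(* Continuity, strict convexity and full dimension only make the pool unique;
   concavity holds for whichever pool [qa_pool] picks. *)
move=> [_ D_simplex _] s_proper _ _ [_ s_exposure] g_convex D_ps j w1 w2 t w1S w2S t01.
have pool := qa_poolP g_convex D_ps.
have wS := convex_simplex w1S w2S t01.
rewrite /weight_score.
set q := qa_pool D g ps (t *: w1 + _); set q1 := qa_pool D g ps w1; set q2 := qa_pool D g ps w2.
have [c g_q] := is_qa_pool_combine (pool _ w1S) (pool _ w2S) (pool _ wS).
have [[Dq _] [Dq1 _] [Dq2 _]] := And3 (pool _ wS) (pool _ w1S) (pool _ w2S).
have zero_sum := sum_delta_sub j (D_simplex _ Dq).
have le1 := score_le_tangent s_exposure s_proper D_simplex j Dq Dq1.
have le2 := score_le_tangent s_exposure s_proper D_simplex j Dq Dq2.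
rewrite (s_exposure _ _ Dq) g_q !dotvDl !dotvZl dotv_ones zero_sum mulr0 addr0.
case/andP: t01 => t_ge0 t_le1; have t'_ge0 : 0 <= 1 - t by rewrite subr_ge0.
have := ler_wpM2l t_ge0 le1; have := ler_wpM2l t'_ge0 le2; lra.
Qed.
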